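(* Let $F(z,\zeta,\bar z,\bar\zeta)$ be real-analytic near $0$ with $F_{z\bar z}\neq0$ and $F_{z\bar z}F_{\zeta\bar\zeta}-F_{\zeta\bar z}F_{z\bar\zeta}\equiv0$. For every multiindex $(a,b,c,d)\in\mathbb{N}^4$ with $b\geq1$ and $d\geq1$, setting $n:=a+b+c+d$, there exist a polynomial $P_{a,b,c,d}$ (not depending on $F$) and an integer $N_{a,b,c,d}\geq1$ such that $$F_{z^a\zeta^b\bar z^c\bar\zeta^d}\equiv\frac{1}{(F_{z\bar z})^{N_{a,b,c,d}}}\,P_{a,b,c,d}\Big(\{F_{z^{a'}\bar z^{c'}}\}_{a'+c'\leq n},\ \{F_{z^{a'}\zeta^{b'}\bar z^{c'}}\}_{a'+b'+c'\leq n},\ \{F_{z^{a'}\bar z^{c'}\bar\zeta^{d'}}\}_{a'+c'+d'\leq n}\Big).$$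
   Context: Subscripts denote partial derivatives, e.g. $F_{z^a\zeta^b\bar z^c\bar\zeta^d}=\partial_z^a\partial_\zeta^b\partial_{\bar z}^c\partial_{\bar\zeta}^dF$. *)

From HB Require Import structures.
From mathcomp Require Import all_boot all_order all_algebra.
From mathcomp Require Import complex.
From mathcomp Require Import Rstruct.
Set Implicit Arguments.
Unset Strict Implicit.
Unset Printing Implicit Defensive.
Import Order.TTheory GRing.Theory Num.Theory.
Local Open Scope ring_scope.

Definition CC : fieldType := (Rdefinitions.R)[i].

(* A (formal) power series in the four independent variables
   (z, zeta, zbar, zetabar): F i j k l is the coefficient of
   z^i zeta^j zbar^k zetabar^l. A real-analytic function near 0 on C^2
   is exactly a convergent such series (see [ps_convergent]). *)
Definition ps := nat -> nat -> nat -> nat -> CC.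

Definition ps_convergent (F : ps) : Prop :=
  exists M : Rdefinitions.R, 0 < M /\
    forall i j k l : nat,
      Normc.normc (F i j k l : (Rdefinitions.R)[i]) <= M ^+ (i + j + k + l).

Definition ps_const (c : CC) : ps :=
  fun i j k l => if [&& i == 0%N, j == 0%N, k == 0%N & l == 0%N] then c else 0.
Definition ps_add (F G : ps) : ps := fun i j k l => F i j k l + G i j k l.
Definition ps_mul (F G : ps) : ps := fun i j k l =>
  \sum_(i1 < i.+1) \sum_(j1 < j.+1) \sum_(k1 < k.+1) \sum_(l1 < l.+1)
     F i1 j1 k1 l1 * G (i - i1)%N (j - j1)%N (k - k1)%N (l - l1)%N.
Definition ps_pow (F : ps) (n : nat) : ps := iter n (ps_mul F) (ps_const 1).

(* Partial derivatives: d/dz, d/dzeta, d/dzbar, d/dzetabar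
   (z, zeta, zbar, zetabar treated as independent variables, i.e.
   Wirtinger derivatives of the real-analytic function). *)
Definition dz (F : ps) : ps := fun i j k l => i.+1%:R * F i.+1 j k l.
Definition dzeta (F : ps) : ps := fun i j k l => j.+1%:R * F i j.+1 k l.
Definition dzb (F : ps) : ps := fun i j k l => k.+1%:R * F i j k.+1 l.
Definition dzetab (F : ps) : ps := fun i j k l => l.+1%:R * F i j k l.+1.

Definition pderiv (a b c d : nat) (F : ps) : ps :=
  iter a dz (iter b dzeta (iter c dzb (iter d dzetab F))).

Definition ps_at0 (F : ps) : CC := F 0%N 0%N 0%N 0%N.

Inductive dvar : Type :=
  | VarA of nat & nat
  | VarB of nat & nat & nat
  | VarC of nat & nat & nat.

Definition dvar_ok (n : nat) (v : dvar) : bool :=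
  match v with
  | VarA a' c' => (a' + c' <= n)%N
  | VarB a' b' c' => (a' + b' + c' <= n)%N
  | VarC a' c' d' => (a' + c' + d' <= n)%N
  end.

Definition dvar_eval (F : ps) (v : dvar) : ps :=
  match v with
  | VarA a' c' => pderiv a' 0 c' 0 F
  | VarB a' b' c' => pderiv a' b' c' 0 F
  | VarC a' c' d' => pderiv a' 0 c' d' F
  end.

Inductive polyexpr : Type :=
  | PConst of CC
  | PVar of dvar
  | PAdd of polyexpr & polyexpr
  | PMul of polyexpr & polyexpr.

Fixpoint pvars_ok (n : nat) (P : polyexpr) : bool :=
  match P with
  | PConst _ => true
  | PVar v => dvar_ok n v
  | PAdd P1 P2 => pvars_ok n P1 && pvars_ok n P2
  | PMul P1 P2 => pvars_ok n P1 && pvars_ok n P2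
  end.

Fixpoint peval (F : ps) (P : polyexpr) : ps :=
  match P with
  | PConst c => ps_const c
  | PVar v => dvar_eval F v
  | PAdd P1 P2 => ps_add (peval F P1) (peval F P2)
  | PMul P1 P2 => ps_mul (peval F P1) (peval F P2)
  end.

(* Write H := F_{z zbar}.  The degeneracy identity reads
   H F_{zeta zetabar} = F_{zeta zbar} F_{z zetabar}, so F_{zeta zetabar} is a
   polynomial in admissible derivatives divided by a power of H.  This property
   passes from G to any derivative dG as soon as d maps the admissible variables
   to such quotients, by the quotient rule
   H^(N+1) dG = H d(H^N G) - N (dH) (H^N G).
   Derivatives in z and zbar merely raise the order of the variables; d/dzetabar
   sends F_{z^a zeta zbar^c} to F_{z^a zeta zbar^c zetabar}, obtained from
   F_{zeta zetabar} by z and zbar derivatives; and d/dzeta sends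
   F_{z^a zbar^c zetabar^d} to F_{z^a zeta zbar^c zetabar^d}, obtained before by
   d/dzetabar.  All identities hold between formal power series. *)

From HB Require Import structures.
From mathcomp Require Import all_boot all_order all_algebra.
From mathcomp Require Import complex Rstruct.
From mathcomp Require Import boolp.
From mathcomp Require Import ring zify.
Import Order.TTheory GRing.Theory Num.Theory.
Local Open Scope ring_scope.
Set Implicit Arguments.
Unset Strict Implicit.

Definition fs (R : Type) := nat -> R.

Section FormalSeries.
Variable R : comNzRingType.

HB.instance Definition _ := Choice.copy (fs R) (nat -> R).

Definition fs_add (F G : fs R) : fs R := fun i => F i + G i.
Definition fs_opp (F : fs R) : fs R := fun i => - F i.
Definition fs_zero : fs R := fun _ => 0.
Definition fs_one : fs R := fun i => if i == 0%N then 1 else 0.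
Definition fs_mul (F G : fs R) : fs R :=
  fun n => \sum_(j < n.+1) F j * G (n - j)%N.

Lemma fs_addA : associative fs_add.
Proof. by move=> F G H; apply: funext => i; rewrite /fs_add addrA. Qed.
Lemma fs_addC : commutative fs_add.
Proof. by move=> F G; apply: funext => i; rewrite /fs_add addrC. Qed.
Lemma fs_add0 : left_id fs_zero fs_add.
Proof. by move=> F; apply: funext => i; rewrite /fs_add add0r. Qed.
Lemma fs_addN : left_inverse fs_zero fs_opp fs_add.
Proof. by move=> F; apply: funext => i; rewrite /fs_add addNr. Qed.

HB.instance Definition _ :=
  GRing.isZmodule.Build (fs R) fs_addA fs_addC fs_add0 fs_addN.

(* Up to degree [n] the Cauchy product is the product of the truncations, so the
   ring laws are inherited from [{poly R}]. *)
Definition fs_trunc (n : nat) (F : fs R) : {poly R} := \poly_(i < n.+1) F i.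

Lemma coef_fs_trunc n F i : (i <= n)%N -> (fs_trunc n F)`_i = F i.
Proof. by move=> lein; rewrite coef_poly ltnS lein. Qed.

Lemma fs_mul_coefM (p q : {poly R}) F G n :
    (forall i, (i <= n)%N -> F i = p`_i) -> (forall i, (i <= n)%N -> G i = q`_i) ->
  fs_mul F G n = (p * q)`_n.
Proof.
move=> Fp Gq; rewrite coefM; apply: eq_bigr => j _.
by rewrite Fp ?Gq ?leq_subr // -ltnS.
Qed.

Lemma fs_mul_trunc m F G n :
  (n <= m)%N -> fs_mul F G n = (fs_trunc m F * fs_trunc m G)`_n.
Proof.
by move=> lenm; apply: fs_mul_coefM => i lein; rewrite coef_fs_trunc // (leq_trans lein).
Qed.

Lemma fs_mulA : associative fs_mul.
Proof.
move=> F G H; apply: funext => n.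
have truncE (K : fs R) i : (i <= n)%N -> K i = (fs_trunc n K)`_i.
  by move=> lein; rewrite coef_fs_trunc.
have mulE (K L : fs R) i : (i <= n)%N -> fs_mul K L i = (fs_trunc n K * fs_trunc n L)`_i.
  exact: fs_mul_trunc.
by rewrite (fs_mul_coefM (mulE F G) (truncE H)) (fs_mul_coefM (truncE F) (mulE G H)) mulrA.
Qed.

Lemma fs_mulC : commutative fs_mul.
Proof. by move=> F G; apply: funext => n; rewrite !(fs_mul_trunc (m := n)) // mulrC. Qed.

Lemma fs_trunc1 n : fs_trunc n fs_one = 1.
Proof. by apply/polyP => -[|i]; rewrite coef_poly coef1 //=; case: ifP. Qed.

Lemma fs_mul1 : left_id fs_one fs_mul.
Proof.
move=> F; apply: funext => n.
by rewrite (fs_mul_trunc (m := n)) // fs_trunc1 mul1r coef_fs_trunc.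
Qed.

Lemma fs_truncD n F G : fs_trunc n (fs_add F G) = fs_trunc n F + fs_trunc n G.
Proof. by apply/polyP => i; rewrite coefD !coef_poly; case: ifP; rewrite ?addr0. Qed.

Lemma fs_mulDl : left_distributive fs_mul fs_add.
Proof.
move=> F G H; apply: funext => n.
by rewrite /fs_add !(fs_mul_trunc (m := n)) // fs_truncD mulrDl coefD.
Qed.

Lemma fs_one_neq0 : fs_one != 0.
Proof.
by apply/eqP => /(congr1 (fun F : fs R => F 0%N)) /eqP; rewrite /fs_one /= oner_eq0.
Qed.

HB.instance Definition _ := GRing.Zmodule_isComNzRing.Build (fs R)
  fs_mulA fs_mulC fs_mul1 fs_mulDl fs_one_neq0.

Lemma fs_addE (F G : fs R) n : (F + G) n = F n + G n.
Proof. by []. Qed.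

Lemma fs_mulE (F G : fs R) n : (F * G) n = \sum_(j < n.+1) F j * G (n - j)%N.
Proof. by []. Qed.

Lemma fs_coefM (p q : {poly R}) (F G : fs R) n :
    (forall i, (i <= n)%N -> F i = p`_i) -> (forall i, (i <= n)%N -> G i = q`_i) ->
  (F * G) n = (p * q)`_n.
Proof. exact: fs_mul_coefM. Qed.

Lemma fs_oneE n : (1 : fs R) n = if n == 0%N then 1 else 0.
Proof. by []. Qed.

Lemma fs_natmulE (F : fs R) m n : (F *+ m) n = F n *+ m.
Proof. by elim: m => [|m IH] //; rewrite !mulrS -IH. Qed.

Lemma fs_sumE I (r : seq I) (P : pred I) (f : I -> fs R) n :
  (\sum_(i <- r | P i) f i) n = \sum_(i <- r | P i) f i n.
Proof. by elim/big_rec2: _ => // i x y _ <-. Qed.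

Definition fs_deriv (F : fs R) : fs R := fun i => F i.+1 *+ i.+1.

Lemma fs_derivD (F G : fs R) : fs_deriv (F + G) = fs_deriv F + fs_deriv G.
Proof. by apply: funext => i; rewrite /fs_deriv /= mulrnDl. Qed.

Lemma fs_derivM (F G : fs R) : fs_deriv (F * G) = fs_deriv F * G + F * fs_deriv G.
Proof.
have coef_trunc_deriv n (K : fs R) i :
    (i <= n)%N -> fs_deriv K i = (fs_trunc n.+1 K)^`()`_i.
  by move=> lein; rewrite coef_deriv coef_fs_trunc.
have coef_trunc n (K : fs R) i : (i <= n)%N -> K i = (fs_trunc n.+1 K)`_i.
  by move=> lein; rewrite coef_fs_trunc // (leq_trans lein).
apply: funext => n.
have -> : fs_deriv (F * G) n = ((fs_trunc n.+1 F * fs_trunc n.+1 G)^`())`_n.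
  by rewrite coef_deriv -fs_mul_trunc.
rewrite derivM coefD; congr (_ + _); symmetry; apply: fs_coefM => i lein.
all: first [exact: coef_trunc_deriv lein | exact: coef_trunc lein].
Qed.

End FormalSeries.

Definition derivation (R : comNzRingType) (δ : R -> R) :=
  {morph δ : x y / x + y} /\ (forall x y, δ (x * y) = δ x * y + x * δ y).

Section Derivation.
Variables (R : comNzRingType) (δ : R -> R).
Hypothesis δ_der : derivation δ.

Lemma der0 : δ 0 = 0.
Proof. by apply: (addIr (δ 0)); rewrite add0r -δ_der.1 addr0. Qed.

Lemma der1 : δ 1 = 0.
Proof.
have := δ_der.2 1 1; rewrite !mulr1 mul1r => δ1D.
by apply: (addIr (δ 1)); rewrite add0r -δ1D.
Qed.

Lemma der_sum I (r : seq I) (P : pred I) (f : I -> R) :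
  δ (\sum_(i <- r | P i) f i) = \sum_(i <- r | P i) δ (f i).
Proof. by elim/big_rec2: _ => [|i x y _ <-]; rewrite ?der0 // δ_der.1. Qed.

Lemma der_exprn h n : h * δ (h ^+ n) = h ^+ n * δ h *+ n.
Proof.
elim: n => [|n IH]; first by rewrite der1 mulr0.
by rewrite exprS δ_der.2 mulrDr IH mulrS; ring.
Qed.

(* The quotient rule, with denominators cleared. *)
Lemma der_quotient h g n :
  h ^+ n.+1 * δ g = h * δ (h ^+ n * g) - δ h * (h ^+ n * g) *+ n.
Proof.
rewrite δ_der.2 mulrDr mulrA der_exprn mulrnAl.
have -> : δ h * (h ^+ n * g) = h ^+ n * δ h * g by rewrite mulrCA mulrA.
by rewrite addrAC subrr add0r mulrA -exprS.
Qed.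

Definition fs_map (F : fs R) : fs R := fun i => δ (F i).

Lemma fs_map_derivation : derivation fs_map.
Proof.
split=> F G; apply: funext => n; first exact: δ_der.1.
rewrite /fs_map fs_addE !fs_mulE der_sum -big_split; apply: eq_bigr => i _.
exact: δ_der.2.
Qed.
End Derivation.

Lemma fs_deriv_derivation (R : comNzRingType) : derivation (@fs_deriv R).
Proof. by split; [exact: fs_derivD | exact: fs_derivM]. Qed.

(* [ps] is [fs] iterated four times, hence a commutative ring. *)
Notation PS := (fs (fs (fs (fs CC)))).

Lemma ps_ext (X Y : ps) : (forall i j k l, X i j k l = Y i j k l) -> X = Y.
Proof. by move=> XY; do 4![apply: funext => ?]; exact: XY. Qed.

Lemma ps_addE (X Y : ps) : ps_add X Y = (X : PS) + Y.
Proof. exact: ps_ext. Qed.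

Lemma ps_mulE (X Y : ps) : ps_mul X Y = (X : PS) * Y.
Proof.
apply: ps_ext => i j k l; rewrite fs_mulE !fs_sumE; apply: eq_bigr => i1 _.
rewrite fs_mulE !fs_sumE; apply: eq_bigr => j1 _.
by rewrite fs_mulE fs_sumE; apply: eq_bigr => k1 _.
Qed.

Lemma ps_const0 : (ps_const 0 : PS) = 0.
Proof. by apply: ps_ext => i j k l; rewrite /ps_const; case: ifP. Qed.

Lemma ps_const1 : (ps_const 1 : PS) = 1.
Proof.
apply: ps_ext => -[|i] [|j] [|k] [|l].
all: by rewrite /ps_const /= !fs_oneE.
Qed.

Lemma ps_constN c : (ps_const (- c) : PS) = - (ps_const c : PS).
Proof.
apply: ps_ext => i j k l; change (ps_const (- c) i j k l = - ps_const c i j k l).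
by rewrite /ps_const; case: ifP; rewrite ?oppr0.
Qed.

Lemma ps_powE (X : ps) m : ps_pow X m = (X : PS) ^+ m.
Proof.
elim: m => [|m IH]; first by rewrite /ps_pow /= ps_const1.
by rewrite /ps_pow iterS -/(ps_pow X m) IH ps_mulE exprS.
Qed.

Lemma dz_derivation : derivation (dz : PS -> PS).
Proof.
have -> : dz = @fs_deriv (fs (fs (fs CC))).
  apply: funext => X; apply: ps_ext => i j k l.
  by rewrite /dz /fs_deriv !fs_natmulE mulr_natl.
exact: fs_deriv_derivation.
Qed.

Lemma dzeta_derivation : derivation (dzeta : PS -> PS).
Proof.
have -> : dzeta = fs_map (@fs_deriv (fs (fs CC))).
  apply: funext => X; apply: ps_ext => i j k l.
  by rewrite /dzeta /fs_map /fs_deriv !fs_natmulE mulr_natl.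
exact/fs_map_derivation/fs_deriv_derivation.
Qed.

Lemma dzb_derivation : derivation (dzb : PS -> PS).
Proof.
have -> : dzb = fs_map (fs_map (@fs_deriv (fs CC))).
  apply: funext => X; apply: ps_ext => i j k l.
  by rewrite /dzb /fs_map /fs_deriv !fs_natmulE mulr_natl.
exact/fs_map_derivation/fs_map_derivation/fs_deriv_derivation.
Qed.

Lemma dzetab_derivation : derivation (dzetab : PS -> PS).
Proof.
have -> : dzetab = fs_map (fs_map (fs_map (@fs_deriv CC))).
  apply: funext => X; apply: ps_ext => i j k l.
  by rewrite /dzetab /fs_map /fs_deriv mulr_natl.
exact/fs_map_derivation/fs_map_derivation/fs_map_derivation/fs_deriv_derivation.
Qed.

Lemma dz_const c : (dz (ps_const c) : PS) = 0.
Proof. by apply: ps_ext => i j k l; rewrite /dz /ps_const /= mulr0. Qed.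

Lemma dzeta_const c : (dzeta (ps_const c) : PS) = 0.
Proof. by apply: ps_ext => i j k l; rewrite /dzeta /ps_const /= andbF mulr0. Qed.

Lemma dzb_const c : (dzb (ps_const c) : PS) = 0.
Proof. by apply: ps_ext => i j k l; rewrite /dzb /ps_const /= !andbF mulr0. Qed.

Lemma dzetab_const c : (dzetab (ps_const c) : PS) = 0.
Proof. by apply: ps_ext => i j k l; rewrite /dzetab /ps_const /= !andbF mulr0. Qed.

Lemma iter_commute (A : Type) (f g : A -> A) n x :
  (forall y, f (g y) = g (f y)) -> f (iter n g x) = iter n g (f x).
Proof. by move=> fg; elim: n => //= n IH; rewrite fg IH. Qed.

(* The coordinate derivatives commute: each one only rescales coefficients. *)
Lemma dzeta_pderiv a b c d F : dzeta (pderiv a b c d F) = pderiv a b.+1 c d F.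
Proof.
by rewrite /pderiv (iter_commute _ _ (fun X => ps_ext (fun i j k l => mulrCA _ _ _))).
Qed.

Lemma dzb_pderiv a b c d F : dzb (pderiv a b c d F) = pderiv a b c.+1 d F.
Proof.
rewrite /pderiv (iter_commute _ _ (fun X => ps_ext (fun i j k l => mulrCA _ _ _))).
by rewrite (iter_commute _ _ (fun X => ps_ext (fun i j k l => mulrCA _ _ _))).
Qed.

Lemma dzetab_pderiv a b c d F : dzetab (pderiv a b c d F) = pderiv a b c d.+1 F.
Proof.
rewrite /pderiv (iter_commute _ _ (fun X => ps_ext (fun i j k l => mulrCA _ _ _))).
rewrite (iter_commute _ _ (fun X => ps_ext (fun i j k l => mulrCA _ _ _))).
by rewrite (iter_commute _ _ (fun X => ps_ext (fun i j k l => mulrCA _ _ _))).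
Qed.

Definition Fzzb (F : ps) : PS := pderiv 1 0 1 0 F.

Definition degenerate (F : ps) : Prop :=
  ps_add (ps_mul (pderiv 1 0 1 0 F) (pderiv 0 1 0 1 F))
         (ps_mul (ps_const (-1)) (ps_mul (pderiv 0 1 1 0 F) (pderiv 1 0 0 1 F)))
  = ps_const 0.

Lemma degenerateE F : degenerate F ->
  Fzzb F * pderiv 0 1 0 1 F = (pderiv 0 1 1 0 F : PS) * pderiv 1 0 0 1 F.
Proof.
rewrite /degenerate ps_addE !ps_mulE ps_constN ps_const1 ps_const0 mulN1r.
by move=> FD; apply: subr0_eq; exact: FD.
Qed.

Fixpoint pvars (p : dvar -> bool) (P : polyexpr) : bool :=
  match P with
  | PConst _ => true
  | PVar v => p v
  | PAdd P1 P2 | PMul P1 P2 => pvars p P1 && pvars p P2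
  end.

Lemma pvars_okE n P : pvars_ok n P = pvars (dvar_ok n) P.
Proof. by elim: P => //= P1 -> P2 ->. Qed.

Lemma pvars_mono (p q : dvar -> bool) P :
  (forall v, p v -> q v) -> pvars p P -> pvars q P.
Proof.
by move=> pq; elim: P => //= P1 IH1 P2 IH2 /andP[/IH1 -> /IH2].
Qed.

Fixpoint ppow (P : polyexpr) (k : nat) : polyexpr :=
  if k is k'.+1 then PMul P (ppow P k') else PConst 1.

Lemma peval_ppow F P k : peval F (ppow P k) = (peval F P : PS) ^+ k.
Proof. by elim: k => [|k IH] /=; rewrite ?ps_const1 // ps_mulE IH exprS. Qed.

Lemma pvars_ppow p P k : pvars p P -> pvars p (ppow P k).
Proof. by move=> pP; elim: k => //= k ->; rewrite pP. Qed.

Definition expressible (p : dvar -> bool) (G : ps -> PS) : Prop :=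
  exists N P, pvars p P /\
    forall F, degenerate F -> Fzzb F ^+ N * G F = peval F P.

Section Expressible.
Variable p : dvar -> bool.

Lemma expressible_ext G1 G2 :
  expressible p G1 -> (forall F, degenerate F -> G1 F = G2 F) -> expressible p G2.
Proof.
by move=> [N [P [pP GP]]] G12; exists N, P; split=> // F dF; rewrite -G12 ?GP.
Qed.

Lemma expressible_mono (q : dvar -> bool) G :
  (forall v, p v -> q v) -> expressible p G -> expressible q G.
Proof. by move=> pq [N [P [pP GP]]]; exists N, P; split=> //; exact: pvars_mono pP. Qed.

Lemma expressible_Fzzb_mul k G :
  expressible p (fun F => Fzzb F ^+ k * G F) -> expressible p G.
Proof.
move=> [N [P [pP GP]]]; exists (N + k)%N, P; split=> // F dF.
by rewrite exprD -mulrA GP.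
Qed.

Lemma expressible_peval P : pvars p P -> expressible p (peval ^~ P).
Proof. by move=> pP; exists 0%N, P; split=> // F _; rewrite mul1r. Qed.

Lemma expressible_var v G :
  p v -> (forall F, G F = dvar_eval F v) -> expressible p G.
Proof.
by move=> pv Gv; apply: expressible_ext (expressible_peval (P := PVar v) pv) _.
Qed.

Lemma expressible_const c : expressible p (fun _ => ps_const c).
Proof. exact: (expressible_peval (P := PConst c)). Qed.

Hypothesis pH : p (VarA 1 1).

Lemma expressible_add G1 G2 :
  expressible p G1 -> expressible p G2 -> expressible p (fun F => G1 F + G2 F).
Proof.
move=> [N1 [P1 [pP1 GP1]]] [N2 [P2 [pP2 GP2]]].
pose H := PVar (VarA 1 1).
exists (N1 + N2)%N, (PAdd (PMul (ppow H N2) P1) (PMul (ppow H N1) P2)).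
split=> [|F dF]; first by rewrite /= pP1 pP2 !pvars_ppow.
rewrite /= ps_addE !ps_mulE !peval_ppow -GP1 // -GP2 // exprD /Fzzb; ring.
Qed.

Lemma expressible_mul G1 G2 :
  expressible p G1 -> expressible p G2 -> expressible p (fun F => G1 F * G2 F).
Proof.
move=> [N1 [P1 [pP1 GP1]]] [N2 [P2 [pP2 GP2]]].
exists (N1 + N2)%N, (PMul P1 P2); split=> [|F dF]; first by rewrite /= pP1 pP2.
by rewrite /= ps_mulE -GP1 // -GP2 // exprD; ring.
Qed.

Lemma expressible_opp G : expressible p G -> expressible p (fun F => - G F).
Proof.
move=> eG; apply: expressible_ext (expressible_mul (expressible_const (-1)) eG) _ => F _.
by rewrite ps_constN ps_const1 mulN1r.
Qed.

Lemma expressible_natmul G n : expressible p G -> expressible p (fun F => G F *+ n).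
Proof.
move=> eG; elim: n => [|n IH].
  by apply: expressible_ext (expressible_const 0) _ => F _; rewrite ps_const0.
by apply: expressible_ext (expressible_add eG IH) _ => F _; rewrite mulrS.
Qed.

End Expressible.

Lemma expressible_der (p q : dvar -> bool) (δ : PS -> PS) :
    derivation δ -> (forall c, δ (ps_const c) = 0) ->
    p (VarA 1 1) -> q (VarA 1 1) -> (forall v, p v -> q v) ->
    (forall v, p v -> expressible q (fun F => δ (dvar_eval F v))) ->
  forall G, expressible p G -> expressible q (fun F => δ (G F)).
Proof.
move=> δ_der δ_const pH qH pq δ_var.
have eP P : pvars p P -> expressible q (peval ^~ P).
  by move=> pP; apply/expressible_peval/(pvars_mono pq).
have δ_peval P : pvars p P -> expressible q (fun F => δ (peval F P)).
  elim: P => [c|v|P1 IH1 P2 IH2|P1 IH1 P2 IH2] /=.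
  - move=> _; apply: expressible_ext (expressible_const q 0) _ => F _.
    by rewrite δ_const ps_const0.
  - exact: δ_var.
  - case/andP=> /IH1 e1 /IH2 e2; apply: expressible_ext (expressible_add qH e1 e2) _.
    by move=> F _; rewrite ps_addE δ_der.1.
  - case/andP=> pP1 pP2.
    apply: expressible_ext (expressible_add qH (expressible_mul (IH1 pP1) (eP _ pP2))
      (expressible_mul (eP _ pP1) (IH2 pP2))) _.
    by move=> F _; rewrite ps_mulE δ_der.2.
move=> G [N [P [pP GP]]]; apply: (expressible_Fzzb_mul (k := N.+1)).
have eH := expressible_var (p := q) (v := VarA 1 1) (G := Fzzb) qH (fun F => erefl).
have eδH := δ_var _ pH.
apply: expressible_ext (expressible_add qH (expressible_mul eH (δ_peval P pP))
  (expressible_opp (expressible_natmul qH N (expressible_mul eδH (eP P pP))))) _.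
by move=> F dF; rewrite (der_quotient δ_der) GP.
Qed.

(* At most one zeta-derivative: the zetabar-derivative of F_{z^a zeta^b zbar^c}
   with b >= 2 is among the quantities still to be expressed. *)
Definition lin_vars (n : nat) (v : dvar) : bool :=
  match v with
  | VarA a c => (a + c <= n)%N
  | VarB a b c => (a + b + c <= n)%N && (b <= 1)%N
  | VarC a c d => (a + c + d <= n)%N
  end.

Lemma lin_vars_mono m n v : (m <= n)%N -> lin_vars m v -> lin_vars n v.
Proof. by move=> lemn; case: v => /= *; lia. Qed.

Lemma lin_vars_ok m n v : (m <= n)%N -> lin_vars m v -> dvar_ok n v.
Proof. by move=> lemn; case: v => /= *; lia. Qed.

Lemma dvar_ok_mono m n v : (m <= n)%N -> dvar_ok m v -> dvar_ok n v.
Proof. by move=> lemn; case: v => /= *; lia. Qed.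

Lemma expressible_dz m n a b c d : (2 <= n)%N -> (n < m)%N ->
  expressible (lin_vars n) (pderiv a b c d) ->
  expressible (lin_vars m) (pderiv a.+1 b c d).
Proof.
move=> n2 ltnm; apply: (expressible_der dz_derivation dz_const) => //=; try lia.
  by move=> v; apply: lin_vars_mono; lia.
case=> [a' c'|a' b' c'|a' c' d'] /= v_ok.
- by apply: (expressible_var (v := VarA a'.+1 c')) => //=; lia.
- by apply: (expressible_var (v := VarB a'.+1 b' c')) => //=; lia.
- by apply: (expressible_var (v := VarC a'.+1 c' d')) => //=; lia.
Qed.

Lemma expressible_dzb m n a b c d : (2 <= n)%N -> (n < m)%N ->
  expressible (lin_vars n) (pderiv a b c d) ->
  expressible (lin_vars m) (pderiv a b c.+1 d).
Proof.
move=> n2 ltnm eG.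
apply: expressible_ext (expressible_der dzb_derivation dzb_const _ _ _ _ eG) _.
- by rewrite /=; lia.
- by rewrite /=; lia.
- by move=> v; apply: lin_vars_mono; lia.
- case=> [a' c'|a' b' c'|a' c' d'] /= v_ok.
  + by apply: (expressible_var (v := VarA a' c'.+1)) => [/=|F]; [lia | exact: dzb_pderiv].
  + by apply: (expressible_var (v := VarB a' b' c'.+1)) => [/=|F]; [lia | exact: dzb_pderiv].
  + by apply: (expressible_var (v := VarC a' c'.+1 d')) => [/=|F]; [lia | exact: dzb_pderiv].
- by move=> F _; exact: dzb_pderiv.
Qed.

Lemma expressible_pderiv_b1d1 a c :
  expressible (lin_vars (a + 1 + c + 1)) (pderiv a 1 c 1).
Proof.
elim: a => [|a IHa]; last by apply: expressible_dz IHa; lia.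
elim: c => [|c IHc]; last by apply: expressible_dzb IHc; lia.
exists 1%N, (PMul (PVar (VarB 0 1 1)) (PVar (VarC 1 0 1))); split=> // F /degenerateE.
by rewrite expr1 /= ps_mulE.
Qed.

Lemma expressible_dzetab m n a b c d : (2 <= n)%N -> (n < m)%N ->
  expressible (lin_vars n) (pderiv a b c d) ->
  expressible (lin_vars m) (pderiv a b c d.+1).
Proof.
move=> n2 ltnm eG.
apply: expressible_ext (expressible_der dzetab_derivation dzetab_const _ _ _ _ eG) _.
- by rewrite /=; lia.
- by rewrite /=; lia.
- by move=> v; apply: lin_vars_mono; lia.
- case=> [a' c'|a' [|[|b']] c'|a' c' d'] /= v_ok.
  + by apply: (expressible_var (v := VarC a' c' 1)) => [/=|F]; [lia | exact: dzetab_pderiv].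
  + by apply: (expressible_var (v := VarC a' c' 1)) => [/=|F]; [lia | exact: dzetab_pderiv].
  + apply: expressible_ext (expressible_mono _ (expressible_pderiv_b1d1 a' c')) _.
      by move=> v; apply: lin_vars_mono; lia.
    by move=> F _; rewrite /= dzetab_pderiv.
  + by lia.
  + apply: (expressible_var (v := VarC a' c' d'.+1)) => [/=|F]; first by lia.
    exact: dzetab_pderiv.
- by move=> F _; exact: dzetab_pderiv.
Qed.

Lemma expressible_pderiv_b1 a c d : (1 <= d)%N ->
  expressible (lin_vars (a + 1 + c + d)) (pderiv a 1 c d).
Proof.
case: d => [//|d] _; elim: d => [|d IHd]; first exact: expressible_pderiv_b1d1.
by apply: expressible_dzetab IHd; lia.
Qed.

Lemma expressible_dzeta m n a b c d : (2 <= n)%N -> (n < m)%N ->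
  expressible (dvar_ok n) (pderiv a b c d) ->
  expressible (dvar_ok m) (pderiv a b.+1 c d).
Proof.
move=> n2 ltnm eG.
apply: expressible_ext (expressible_der dzeta_derivation dzeta_const _ _ _ _ eG) _.
- by rewrite /=; lia.
- by rewrite /=; lia.
- by move=> v; apply: dvar_ok_mono; lia.
- case=> [a' c'|a' b' c'|a' c' [|d']] /= v_ok.
  + by apply: (expressible_var (v := VarB a' 1 c')) => [/=|F]; [lia | exact: dzeta_pderiv].
  + by apply: (expressible_var (v := VarB a' b'.+1 c')) => [/=|F]; [lia | exact: dzeta_pderiv].
  + by apply: (expressible_var (v := VarB a' 1 c')) => [/=|F]; [lia | exact: dzeta_pderiv].
  + apply: expressible_ext (expressible_mono _ (expressible_pderiv_b1 a' c' (ltn0Sn d'))) _.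
      by move=> v; apply: lin_vars_ok; lia.
    by move=> F _; rewrite /= dzeta_pderiv.
- by move=> F _; exact: dzeta_pderiv.
Qed.

Lemma expressible_pderiv a b c d : (1 <= b)%N -> (1 <= d)%N ->
  expressible (dvar_ok (a + b + c + d)) (pderiv a b c d).
Proof.
case: b => [//|b] _ d1; elim: b => [|b IHb].
  by apply: expressible_mono (expressible_pderiv_b1 a c d1) => v; apply: lin_vars_ok.
by apply: expressible_dzeta IHb; lia.
Qed.

Theorem lemma7p1 :
  forall a b c d : nat, (1 <= b)%N -> (1 <= d)%N ->
  let n := (a + b + c + d)%N in
  exists (N : nat) (P : polyexpr),
    (1 <= N)%N /\ pvars_ok n P /\
    forall F : ps,
      ps_convergent F ->
      ps_at0 (pderiv 1 0 1 0 F) != 0 ->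
      ps_add (ps_mul (pderiv 1 0 1 0 F) (pderiv 0 1 0 1 F))
             (ps_mul (ps_const (-1)) (ps_mul (pderiv 0 1 1 0 F) (pderiv 1 0 0 1 F)))
        = ps_const 0 ->
      ps_mul (ps_pow (pderiv 1 0 1 0 F) N) (pderiv a b c d F) = peval F P.
Proof.
move=> a b c d b1 d1 n.
have [N [P [pP FP]]] := expressible_pderiv a c b1 d1.
exists N.+1, (PMul (PVar (VarA 1 1)) P); split=> //; split.
  by rewrite pvars_okE /= pP andbT /n; lia.
by move=> F _ _ dF; rewrite ps_mulE ps_powE /= ps_mulE exprS -mulrA FP.
Qed.
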